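(* Let $\alpha,\beta$ be real constants with $\alpha\beta^2-4\alpha^2\neq 0$, and let $\Omega\subseteq\mathbb{R}^2$ be a domain. Let $A,B,E,F,G:\Omega\to\mathbb{C}(\alpha,\beta)$ be continuously differentiable functions and let $C,D:\Omega\to\mathbb{C}(\alpha,\beta)$ be arbitrary functions. Define the operator $$\mathbf{L}w := A\,\partial_z w + B\,\overline{\partial_z w} + C\,\partial_{\bar z} w + D\,\overline{\partial_{\bar z} w} + E\,w + F\,\overline{w} + G,$$ acting on twice continuously differentiable functions $w:\Omega\to\mathbb{C}(\alpha,\beta)$ (all products taken in $\mathbb{C}(\alpha,\beta)$). Then $\mathbf{L}$ is associated to the Cauchy–Riemann operator $\partial_{\bar z}$ (i.e. $\partial_{\bar z}w=0$ implies $\partial_{\bar z}(\mathbf{L}w)=0$) if and only if $B\equiv 0$, $F\equiv 0$, and $A$, $E$, $G$ are holomorphic in $\Omega$ (i.e. $\partial_{\bar z}A=\partial_{\bar z}E=\partial_{\bar z}G=0$).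
   Context: For real parameters $\alpha,\beta$, $\mathbb{C}(\alpha,\beta)$ denotes the real algebra of numbers $z=x+iy$ ($x,y\in\mathbb{R}$) with $i^2=-\alpha-\beta i$ (structure polynomial $X^2+\beta X+\alpha$); thus $(x_1+iy_1)(x_2+iy_2)=(x_1x_2-\alpha y_1y_2)+i(x_1y_2+x_2y_1-\beta y_1y_2)$, which is commutative and associative. Conjugation is $\overline{x+iy}=x-iy$. For a differentiable function $w=u+iv$ of $(x,y)$ with real $u,v$, the Cauchy–Riemann operator is $\partial_{\bar z}=\tfrac12(\partial_x+i\partial_y)$ and its conjugate is $\partial_z=\tfrac12(\partial_x-i\partial_y)$ (multiplication by $i$ in $\mathbb{C}(\alpha,\beta)$). A function $w$ is holomorphic if $\partial_{\bar z}w=0$, equivalently $\partial_xu-\alpha\partial_yv=0$ and $\partial_yu+\partial_xv-\beta\partial_yv=0$. Two differential operators $\mathbf{L},\mathbf{G}$ are called associated if $\mathbf{G}w=0$ implies $\mathbf{G}(\mathbf{L}w)=0$. *)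

From Stdlib Require Import Reals.
From Coquelicot Require Import Coquelicot.
Open Scope R_scope.

(* Elements of C(alpha,beta): x + i y represented as the pair (x, y). *)
Definition alg := (R * R)%type.

(* Product in C(alpha,beta): i^2 = -alpha - beta i. *)
Definition cmul (alpha beta : R) (z1 z2 : alg) : alg :=
  (fst z1 * fst z2 - alpha * snd z1 * snd z2,
   fst z1 * snd z2 + fst z2 * snd z1 - beta * snd z1 * snd z2).

Definition cadd (z1 z2 : alg) : alg := (fst z1 + fst z2, snd z1 + snd z2).
Definition cconj (z : alg) : alg := (fst z, - snd z).
Definition cI : alg := (0, 1).
Definition cscal (r : R) (z : alg) : alg := (r * fst z, r * snd z).

Definition pdx (g : R -> R -> R) (x y : R) : R := Derive (fun t => g t y) x.
Definition pdy (g : R -> R -> R) (x y : R) : R := Derive (fun t => g x t) y.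

Definition Dx (f : R -> R -> alg) (x y : R) : alg :=
  (pdx (fun a b => fst (f a b)) x y, pdx (fun a b => snd (f a b)) x y).
Definition Dy (f : R -> R -> alg) (x y : R) : alg :=
  (pdy (fun a b => fst (f a b)) x y, pdy (fun a b => snd (f a b)) x y).

Definition dzb (alpha beta : R) (f : R -> R -> alg) (x y : R) : alg :=
  cscal (1/2) (cadd (Dx f x y) (cmul alpha beta cI (Dy f x y))).
Definition dz (alpha beta : R) (f : R -> R -> alg) (x y : R) : alg :=
  cscal (1/2) (cadd (Dx f x y) (cscal (-1) (cmul alpha beta cI (Dy f x y)))).

Definition open2 (U : R -> R -> Prop) : Prop :=
  forall x y, U x y -> exists eps, 0 < eps /\
    forall x' y', Rabs (x' - x) < eps -> Rabs (y' - y) < eps -> U x' y'.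

Definition connected2 (O : R -> R -> Prop) : Prop :=
  forall U V : R -> R -> Prop, open2 U -> open2 V ->
    (forall x y, O x y -> U x y \/ V x y) ->
    (forall x y, O x y -> ~ (U x y /\ V x y)) ->
    (exists x y, O x y /\ U x y) -> (exists x y, O x y /\ V x y) -> False.

Definition is_domain (O : R -> R -> Prop) : Prop :=
  (exists x y, O x y) /\ open2 O /\ connected2 O.

Definition C1r (O : R -> R -> Prop) (g : R -> R -> R) : Prop :=
  forall x y, O x y ->
    ex_derive (fun t => g t y) x /\ ex_derive (fun t => g x t) y /\
    continuity_2d_pt (pdx g) x y /\ continuity_2d_pt (pdy g) x y.

Definition C2r (O : R -> R -> Prop) (g : R -> R -> R) : Prop :=
  C1r O g /\ C1r O (pdx g) /\ C1r O (pdy g).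

Definition C1on (O : R -> R -> Prop) (f : R -> R -> alg) : Prop :=
  C1r O (fun a b => fst (f a b)) /\ C1r O (fun a b => snd (f a b)).
Definition C2on (O : R -> R -> Prop) (f : R -> R -> alg) : Prop :=
  C2r O (fun a b => fst (f a b)) /\ C2r O (fun a b => snd (f a b)).

Definition Lop (alpha beta : R) (A B C D E F G : R -> R -> alg)
  (w : R -> R -> alg) (x y : R) : alg :=
  let m := cmul alpha beta in
  cadd (m (A x y) (dz alpha beta w x y))
  (cadd (m (B x y) (cconj (dz alpha beta w x y)))
  (cadd (m (C x y) (dzb alpha beta w x y))
  (cadd (m (D x y) (cconj (dzb alpha beta w x y)))
  (cadd (m (E x y) (w x y))
  (cadd (m (F x y) (cconj (w x y))) (G x y)))))).

Definition holo (alpha beta : R) (O : R -> R -> Prop) (f : R -> R -> alg) : Prop :=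
  forall x y, O x y -> dzb alpha beta f x y = (0, 0).

Definition associated_dzb (alpha beta : R) (O : R -> R -> Prop)
  (L : (R -> R -> alg) -> R -> R -> alg) : Prop :=
  forall w, C2on O w -> holo alpha beta O w -> holo alpha beta O (L w).

(* For holomorphic [w] the terms in [C] and [D] of [L w] vanish identically and [dz w = Dx w],
   and [dzb (Dx w) = Dx (dzb w) = 0] by Schwarz's theorem; since [dzb] is a derivation of the
   algebra C(alpha,beta), this gives

     dzb (L w) = (dzb A) w_x + (dzb B) conj(w_x) + B dzb(conj w_x)
               + (dzb E) w + (dzb F) conj(w) + F dzb(conj w) + dzb G.

   The "if" direction is immediate. Conversely, the holomorphic polynomials
   [c0 + c1 zeta + c2 zeta^2] in [zeta = (y - y0) - i (x - x0)] prescribe the values of [w],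
   [w_x] and of the two conjugate terms at [(x0, y0)] independently. Suitable choices of
   [c0, c1, c2] successively isolate [dzb G], then [dzb E] and [dzb F], then [B], and finally
   [dzb A] and [F]; each step cancels a factor whose norm [x^2 - beta x y + alpha y^2] is a
   nonzero multiple of [alpha] or of [alpha beta^2 - 4 alpha^2]. *)

From Stdlib Require Import Reals Lra FunctionalExtensionality.
From Coquelicot Require Import Coquelicot.
Open Scope R_scope.

Ltac alg_eq := unfold cadd, cmul, cconj, cscal, cI;
  apply injective_projections; cbn [fst snd]; first [ring | field].

Definition ex_cderive (g : R -> alg) (t : R) : Prop :=
  ex_derive (fun s => fst (g s)) t /\ ex_derive (fun s => snd (g s)) t.

Definition cderive (g : R -> alg) (t : R) : alg :=
  (Derive (fun s => fst (g s)) t, Derive (fun s => snd (g s)) t).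

Lemma alg_fun_split (g : R -> alg) : exists g1 g2 : R -> R, g = fun s => (g1 s, g2 s).
Proof.
exists (fun s => fst (g s)), (fun s => snd (g s)).
apply functional_extensionality; intro s; now destruct (g s).
Qed.

(* Splitting into real components lets [auto_derive] see through [fst] and [snd]. *)
Ltac split_components :=
  repeat match goal with g : R -> alg |- _ =>
    let g1 := fresh g "1" in let g2 := fresh g "2" in
    destruct (alg_fun_split g) as (g1 & g2 & ->) end;
  unfold ex_cderive, cderive, cadd, cmul, cconj, cscal in *; cbn [fst snd] in *.

Lemma ex_cderive_const (c : alg) t : ex_cderive (fun _ => c) t.
Proof. split; apply ex_derive_const. Qed.

Lemma ex_cderive_add g h t : ex_cderive g t -> ex_cderive h t ->
  ex_cderive (fun s => cadd (g s) (h s)) t.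
Proof. split_components; intros [] []; split; auto_derive; tauto. Qed.

Lemma ex_cderive_mul alpha beta g h t : ex_cderive g t -> ex_cderive h t ->
  ex_cderive (fun s => cmul alpha beta (g s) (h s)) t.
Proof. split_components; intros [] []; split; auto_derive; tauto. Qed.

Lemma ex_cderive_conj g t : ex_cderive g t -> ex_cderive (fun s => cconj (g s)) t.
Proof. split_components; intros []; split; auto_derive; tauto. Qed.

Lemma cderive_const (c : alg) t : cderive (fun _ => c) t = (0, 0).
Proof. unfold cderive; now rewrite !Derive_const. Qed.

Lemma cderive_scal r g t : cderive (fun s => cscal r (g s)) t = cscal r (cderive g t).
Proof. split_components; now rewrite !Derive_scal. Qed.

Lemma cderive_conj g t : cderive (fun s => cconj (g s)) t = cconj (cderive g t).
Proof. split_components; now rewrite Derive_opp. Qed.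

Lemma cderive_add g h t : ex_cderive g t -> ex_cderive h t ->
  cderive (fun s => cadd (g s) (h s)) t = cadd (cderive g t) (cderive h t).
Proof. split_components; intros [] []; now rewrite !Derive_plus. Qed.

Lemma cderive_mul alpha beta g h t : ex_cderive g t -> ex_cderive h t ->
  cderive (fun s => cmul alpha beta (g s) (h s)) t =
  cadd (cmul alpha beta (cderive g t) (h t)) (cmul alpha beta (g t) (cderive h t)).
Proof.
split_components; intros [] [].
f_equal; apply is_derive_unique; auto_derive; try tauto; ring.
Qed.

Definition ex_Dxy (f : R -> R -> alg) (x y : R) : Prop :=
  ex_cderive (fun t => f t y) x /\ ex_cderive (fun t => f x t) y.

Lemma ex_Dxy_const (c : alg) x y : ex_Dxy (fun _ _ => c) x y.
Proof. split; apply ex_cderive_const. Qed.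

Lemma ex_Dxy_add f g x y : ex_Dxy f x y -> ex_Dxy g x y ->
  ex_Dxy (fun a b => cadd (f a b) (g a b)) x y.
Proof. intros [] []; split; now apply ex_cderive_add. Qed.

Lemma ex_Dxy_mul alpha beta f g x y : ex_Dxy f x y -> ex_Dxy g x y ->
  ex_Dxy (fun a b => cmul alpha beta (f a b) (g a b)) x y.
Proof. intros [] []; split; now apply ex_cderive_mul. Qed.

Lemma ex_Dxy_conj f x y : ex_Dxy f x y -> ex_Dxy (fun a b => cconj (f a b)) x y.
Proof. intros []; split; now apply ex_cderive_conj. Qed.

Create HintDb partials.
#[export] Hint Resolve ex_Dxy_const ex_Dxy_add ex_Dxy_mul ex_Dxy_conj : partials.

Lemma Dx_const (c : alg) x y : Dx (fun _ _ => c) x y = (0, 0).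
Proof. exact (cderive_const c x). Qed.

Lemma Dy_const (c : alg) x y : Dy (fun _ _ => c) x y = (0, 0).
Proof. exact (cderive_const c y). Qed.

Lemma Dx_scal r f x y : Dx (fun a b => cscal r (f a b)) x y = cscal r (Dx f x y).
Proof. exact (cderive_scal r (fun t => f t y) x). Qed.

Lemma Dx_conj f x y : Dx (fun a b => cconj (f a b)) x y = cconj (Dx f x y).
Proof. exact (cderive_conj (fun t => f t y) x). Qed.

Lemma Dy_conj f x y : Dy (fun a b => cconj (f a b)) x y = cconj (Dy f x y).
Proof. exact (cderive_conj (fun t => f x t) y). Qed.

Lemma Dx_add f g x y : ex_Dxy f x y -> ex_Dxy g x y ->
  Dx (fun a b => cadd (f a b) (g a b)) x y = cadd (Dx f x y) (Dx g x y).
Proof. intros [df _] [dg _]; exact (cderive_add _ _ x df dg). Qed.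

Lemma Dy_add f g x y : ex_Dxy f x y -> ex_Dxy g x y ->
  Dy (fun a b => cadd (f a b) (g a b)) x y = cadd (Dy f x y) (Dy g x y).
Proof. intros [_ df] [_ dg]; exact (cderive_add _ _ y df dg). Qed.

Lemma Dx_mul alpha beta f g x y : ex_Dxy f x y -> ex_Dxy g x y ->
  Dx (fun a b => cmul alpha beta (f a b) (g a b)) x y =
  cadd (cmul alpha beta (Dx f x y) (g x y)) (cmul alpha beta (f x y) (Dx g x y)).
Proof. intros [df _] [dg _]; exact (cderive_mul alpha beta _ _ x df dg). Qed.

Lemma Dy_mul alpha beta f g x y : ex_Dxy f x y -> ex_Dxy g x y ->
  Dy (fun a b => cmul alpha beta (f a b) (g a b)) x y =
  cadd (cmul alpha beta (Dy f x y) (g x y)) (cmul alpha beta (f x y) (Dy g x y)).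
Proof. intros [_ df] [_ dg]; exact (cderive_mul alpha beta _ _ y df dg). Qed.

Section CauchyRiemann.
Variables alpha beta : R.

Lemma dzb_add f g x y : ex_Dxy f x y -> ex_Dxy g x y ->
  dzb alpha beta (fun a b => cadd (f a b) (g a b)) x y =
  cadd (dzb alpha beta f x y) (dzb alpha beta g x y).
Proof. intros df dg; unfold dzb; rewrite Dx_add, Dy_add by assumption; alg_eq. Qed.

Lemma dzb_mul f g x y : ex_Dxy f x y -> ex_Dxy g x y ->
  dzb alpha beta (fun a b => cmul alpha beta (f a b) (g a b)) x y =
  cadd (cmul alpha beta (dzb alpha beta f x y) (g x y))
       (cmul alpha beta (f x y) (dzb alpha beta g x y)).
Proof. intros df dg; unfold dzb; rewrite Dx_mul, Dy_mul by assumption; alg_eq. Qed.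

Lemma dzb_conj f x y : dzb alpha beta (fun a b => cconj (f a b)) x y =
  cscal (1/2) (cadd (cconj (Dx f x y)) (cmul alpha beta cI (cconj (Dy f x y)))).
Proof. unfold dzb; now rewrite Dx_conj, Dy_conj. Qed.

Lemma dz_eq_Dx f x y : dzb alpha beta f x y = (0, 0) -> dz alpha beta f x y = Dx f x y.
Proof.
unfold dzb, dz; destruct (Dx f x y) as [p q], (Dy f x y) as [r s].
unfold cscal, cadd, cmul, cI; cbn [fst snd]; intros E; injection E as E1 E2.
f_equal; lra.
Qed.

End CauchyRiemann.

Lemma open2_locally_2d Om x y : open2 Om -> Om x y -> locally_2d Om x y.
Proof.
intros HO Hxy; destruct (HO x y Hxy) as (e & He & Hball).
exists (mkposreal e He); simpl; auto.
Qed.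

Section Locality.
Variables (Om : R -> R -> Prop) (f g : R -> R -> alg) (x y : R).
Hypotheses (HO : open2 Om) (Hxy : Om x y) (Efg : forall a b, Om a b -> f a b = g a b).

Let Efg_near : locally_2d (fun a b => f a b = g a b) x y.
Proof.
apply locally_2d_impl with (2 := open2_locally_2d Om x y HO Hxy).
now apply locally_2d_forall.
Qed.

Lemma Dx_ext_open : Dx f x y = Dx g x y.
Proof.
unfold Dx, pdx; f_equal; apply Derive_ext_loc;
  apply (filter_imp _ _ (fun t (E : f t y = g t y) => f_equal _ E));
  exact (locally_2d_1d_const_y _ _ _ Efg_near).
Qed.

Lemma Dy_ext_open : Dy f x y = Dy g x y.
Proof.
unfold Dy, pdy; f_equal; apply Derive_ext_loc;
  apply (filter_imp _ _ (fun t (E : f x t = g x t) => f_equal _ E));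
  exact (locally_2d_1d_const_x _ _ _ Efg_near).
Qed.

Lemma dzb_ext_open alpha beta : dzb alpha beta f x y = dzb alpha beta g x y.
Proof. unfold dzb; now rewrite Dx_ext_open, Dy_ext_open. Qed.

End Locality.

Lemma Dx_eq0_open Om f x y : open2 Om -> Om x y ->
  (forall a b, Om a b -> f a b = (0, 0)) -> Dx f x y = (0, 0).
Proof. intros HO Hxy Hf; rewrite (Dx_ext_open Om f (fun _ _ => (0, 0))); auto using Dx_const. Qed.

Lemma Dy_eq0_open Om f x y : open2 Om -> Om x y ->
  (forall a b, Om a b -> f a b = (0, 0)) -> Dy f x y = (0, 0).
Proof. intros HO Hxy Hf; rewrite (Dy_ext_open Om f (fun _ _ => (0, 0))); auto using Dy_const. Qed.

Lemma dzb_eq0_open alpha beta Om f x y : open2 Om -> Om x y ->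
  (forall a b, Om a b -> f a b = (0, 0)) -> dzb alpha beta f x y = (0, 0).
Proof.
intros HO Hxy Hf; unfold dzb; rewrite (Dx_eq0_open Om), (Dy_eq0_open Om) by assumption.
alg_eq.
Qed.

Lemma C1on_ex_Dxy Om f x y : C1on Om f -> Om x y -> ex_Dxy f x y.
Proof.
intros [H1 H2] Hxy.
destruct (H1 x y Hxy) as (? & ? & _), (H2 x y Hxy) as (? & ? & _).
repeat split; assumption.
Qed.

Lemma C2on_C1on Om f : C2on Om f <-> C1on Om f /\ C1on Om (Dx f) /\ C1on Om (Dy f).
Proof. unfold C2on, C2r, C1on, Dx, Dy; cbn; tauto. Qed.

Lemma pdx_pdy_comm Om g x y : open2 Om -> Om x y -> C2r Om g ->
  pdx (pdy g) x y = pdy (pdx g) x y.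
Proof.
intros HO Hxy (H1 & H2 & H3); apply Schwarz.
- apply locally_2d_impl with (2 := open2_locally_2d Om x y HO Hxy).
  apply locally_2d_forall; intros u v Huv.
  destruct (H1 u v Huv) as (? & ? & _), (H2 u v Huv) as (? & ? & _),
    (H3 u v Huv) as (? & ? & _).
  repeat split; assumption.
- now destruct (H3 x y Hxy) as (_ & _ & ? & _).
- now destruct (H2 x y Hxy) as (_ & _ & _ & ?).
Qed.

Lemma Dx_Dy_comm Om w x y : open2 Om -> Om x y -> C2on Om w ->
  Dx (Dy w) x y = Dy (Dx w) x y.
Proof. intros HO Hxy [H1 H2]; unfold Dx, Dy; cbn; f_equal; now apply (pdx_pdy_comm Om). Qed.

Lemma dzb_Dx_holo alpha beta Om w x y : open2 Om -> Om x y -> C2on Om w ->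
  holo alpha beta Om w -> dzb alpha beta (Dx w) x y = (0, 0).
Proof.
intros HO Hxy Hw Hh.
(* [dzb (Dx w) = Dx (dzb w)] by Schwarz, and [dzb w] vanishes on the open set [Om]. *)
destruct (proj1 (C2on_C1on Om w) Hw) as (_ & Hwx & Hwy).
apply (C1on_ex_Dxy Om _ x y) in Hwx, Hwy; [|assumption..].
assert (Hdx : Dx (dzb alpha beta w) x y = (0, 0)) by now apply (Dx_eq0_open Om).
unfold dzb in Hdx |- *.
rewrite Dx_scal, Dx_add, Dx_mul, Dx_const in Hdx by auto with partials.
rewrite <- (Dx_Dy_comm Om w x y), <- Hdx by assumption.
alg_eq.
Qed.

Lemma dzb_Lop_holo alpha beta Om A B C D E F G w x y : open2 Om -> Om x y ->
  C1on Om A -> C1on Om B -> C1on Om E -> C1on Om F -> C1on Om G ->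
  C2on Om w -> holo alpha beta Om w ->
  let m := cmul alpha beta in
  dzb alpha beta (Lop alpha beta A B C D E F G w) x y =
  cadd (m (dzb alpha beta A x y) (Dx w x y))
  (cadd (m (dzb alpha beta B x y) (cconj (Dx w x y)))
  (cadd (m (B x y) (dzb alpha beta (fun a b => cconj (Dx w a b)) x y))
  (cadd (m (dzb alpha beta E x y) (w x y))
  (cadd (m (dzb alpha beta F x y) (cconj (w x y)))
  (cadd (m (F x y) (dzb alpha beta (fun a b => cconj (w a b)) x y))
   (dzb alpha beta G x y)))))).
Proof.
intros HO Hxy HA HB HE HF HG Hw Hh m; subst m.
destruct (proj1 (C2on_C1on Om w) Hw) as (Hw0 & Hwx & _).
apply (C1on_ex_Dxy Om _ x y) in HA, HB, HE, HF, HG, Hw0, Hwx; [|assumption..].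
(* On [Om] the terms in [C] and [D] vanish and [dz w = Dx w]. *)
rewrite (dzb_ext_open Om _ (fun a b =>
  cadd (cmul alpha beta (A a b) (Dx w a b))
  (cadd (cmul alpha beta (B a b) (cconj (Dx w a b)))
  (cadd (cmul alpha beta (E a b) (w a b))
  (cadd (cmul alpha beta (F a b) (cconj (w a b))) (G a b)))))) by
  (auto; intros a b Hpt; unfold Lop;
   rewrite (dz_eq_Dx _ _ _ _ _ (Hh a b Hpt)), (Hh a b Hpt); alg_eq).
rewrite !dzb_add, !dzb_mul by auto 10 with partials.
rewrite (Hh x y Hxy), (dzb_Dx_holo alpha beta Om w x y) by assumption.
alg_eq.
Qed.

Definition ccont (f : R -> R -> alg) (x y : R) : Prop :=
  continuity_2d_pt (fun a b => fst (f a b)) x y /\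
  continuity_2d_pt (fun a b => snd (f a b)) x y.

Lemma C1on_intro Om f :
  (forall x y, Om x y -> ex_Dxy f x y /\ ccont (Dx f) x y /\ ccont (Dy f) x y) ->
  C1on Om f.
Proof.
intros H; split; intros x y Hxy;
  destruct (H x y Hxy) as ([[] []] & [] & []); repeat split; assumption.
Qed.

Section HolomorphicPolynomials.
Variables (alpha beta x0 y0 : R).

(* The holomorphic coordinate [(y - y0) - i (x - x0)]: [Dx zeta = -i] and [Dy zeta = 1]. *)
Definition zeta (a b : R) : alg := (b - y0, x0 - a).

Definition hpoly (c0 c1 c2 : alg) (a b : R) : alg :=
  cadd c0 (cadd (cmul alpha beta c1 (zeta a b))
                (cmul alpha beta c2 (cmul alpha beta (zeta a b) (zeta a b)))).

Lemma hpoly_at c0 c1 c2 : hpoly c0 c1 c2 x0 y0 = c0.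
Proof. unfold hpoly, zeta; alg_eq. Qed.

Lemma Dx_hpoly c0 c1 c2 : Dx (hpoly c0 c1 c2) =
  hpoly (cscal (-1) (cmul alpha beta cI c1)) (cscal (-2) (cmul alpha beta cI c2)) (0, 0).
Proof.
apply functional_extensionality; intro a; apply functional_extensionality; intro b.
unfold Dx, pdx; apply injective_projections; cbn [fst snd];
  apply is_derive_unique; unfold hpoly, zeta, cadd, cmul, cscal, cI; cbn [fst snd];
  auto_derive; trivial; ring.
Qed.

Lemma Dy_hpoly c0 c1 c2 : Dy (hpoly c0 c1 c2) = hpoly c1 (cscal 2 c2) (0, 0).
Proof.
apply functional_extensionality; intro a; apply functional_extensionality; intro b.
unfold Dy, pdy; apply injective_projections; cbn [fst snd];
  apply is_derive_unique; unfold hpoly, zeta, cadd, cmul, cscal, cI; cbn [fst snd];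
  auto_derive; trivial; ring.
Qed.

Lemma holo_hpoly Om c0 c1 c2 : holo alpha beta Om (hpoly c0 c1 c2).
Proof. intros a b _; unfold dzb; rewrite Dx_hpoly, Dy_hpoly; unfold hpoly, zeta; alg_eq. Qed.

Lemma ex_Dxy_hpoly c0 c1 c2 x y : ex_Dxy (hpoly c0 c1 c2) x y.
Proof.
unfold ex_Dxy, ex_cderive, hpoly, zeta, cadd, cmul; cbn [fst snd];
  repeat split; auto_derive; trivial.
Qed.

Lemma ccont_hpoly c0 c1 c2 x y : ccont (hpoly c0 c1 c2) x y.
Proof.
unfold ccont, hpoly, zeta, cadd, cmul; cbn [fst snd]; split;
  repeat first [apply continuity_2d_pt_plus | apply continuity_2d_pt_minus |
    apply continuity_2d_pt_mult | apply continuity_2d_pt_id1 |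
    apply continuity_2d_pt_id2 | apply continuity_2d_pt_const |
    apply continuity_2d_pt_opp].
Qed.

Lemma C1on_hpoly Om c0 c1 c2 : C1on Om (hpoly c0 c1 c2).
Proof.
apply C1on_intro; intros x y _; rewrite Dx_hpoly, Dy_hpoly.
auto using ex_Dxy_hpoly, ccont_hpoly.
Qed.

Lemma C2on_hpoly Om c0 c1 c2 : C2on Om (hpoly c0 c1 c2).
Proof. apply C2on_C1on; rewrite Dx_hpoly, Dy_hpoly; auto using C1on_hpoly. Qed.

End HolomorphicPolynomials.

Definition cnorm (alpha beta : R) (z : alg) : R :=
  fst z ^ 2 - beta * fst z * snd z + alpha * snd z ^ 2.

(* [cnorm w] is the determinant of multiplication by [w]. *)
Lemma cmul_eq0_l alpha beta z w : cmul alpha beta z w = (0, 0) ->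
  cnorm alpha beta w <> 0 -> z = (0, 0).
Proof.
destruct z as [z1 z2], w as [w1 w2]; unfold cmul, cnorm; cbn [fst snd].
intros E Hw; injection E as E1 E2.
assert (Z1 : z1 * (w1 ^ 2 - beta * w1 * w2 + alpha * w2 ^ 2) = 0).
{ replace (z1 * _) with ((w1 - beta * w2) * (z1 * w1 - alpha * z2 * w2)
    + alpha * w2 * (z1 * w2 + w1 * z2 - beta * z2 * w2)) by ring.
  rewrite E1, E2; ring. }
assert (Z2 : z2 * (w1 ^ 2 - beta * w1 * w2 + alpha * w2 ^ 2) = 0).
{ replace (z2 * _) with (w1 * (z1 * w2 + w1 * z2 - beta * z2 * w2)
    - w2 * (z1 * w1 - alpha * z2 * w2)) by ring.
  rewrite E1, E2; ring. }
apply Rmult_integral in Z1, Z2; f_equal; tauto.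
Qed.

Lemma cmul_cramer2 alpha beta (a f u v u' v' : alg) :
  cadd (cmul alpha beta a u) (cmul alpha beta f v) = (0, 0) ->
  cadd (cmul alpha beta a u') (cmul alpha beta f v') = (0, 0) ->
  cnorm alpha beta (cadd (cmul alpha beta u v') (cscal (-1) (cmul alpha beta u' v))) <> 0 ->
  a = (0, 0) /\ f = (0, 0).
Proof.
intros E1 E2 Hdet; split; refine (cmul_eq0_l alpha beta _ _ _ Hdet).
- transitivity (cadd (cmul alpha beta (cadd (cmul alpha beta a u) (cmul alpha beta f v)) v')
    (cscal (-1) (cmul alpha beta (cadd (cmul alpha beta a u') (cmul alpha beta f v')) v)));
    [alg_eq | rewrite E1, E2; alg_eq].
- transitivity (cadd (cmul alpha beta (cadd (cmul alpha beta a u') (cmul alpha beta f v')) u)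
    (cscal (-1) (cmul alpha beta (cadd (cmul alpha beta a u) (cmul alpha beta f v)) u')));
    [alg_eq | rewrite E1, E2; alg_eq].
Qed.

(* The value of [dzb (conj w)] at a point where [w] is holomorphic with [Dy w = c]. *)
Definition dzb_conj_value (alpha : R) (c : alg) : alg := (alpha * snd c, fst c).

Section Associated.
Variables (alpha beta : R) (Om : R -> R -> Prop) (A B C D E F G : R -> R -> alg).
Hypotheses (Hab : alpha * beta ^ 2 - 4 * alpha ^ 2 <> 0) (HO : open2 Om)
  (HA : C1on Om A) (HB : C1on Om B) (HE : C1on Om E) (HF : C1on Om F) (HG : C1on Om G).

Let Ha : alpha <> 0.
Proof. intro Z; apply Hab; rewrite Z; ring. Qed.

Lemma associated_of_holo :
  (forall x y, Om x y -> B x y = (0, 0)) -> (forall x y, Om x y -> F x y = (0, 0)) ->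
  holo alpha beta Om A -> holo alpha beta Om E -> holo alpha beta Om G ->
  associated_dzb alpha beta Om (Lop alpha beta A B C D E F G).
Proof.
intros B0 F0 HolA HolE HolG w Hw Hh x y Hxy.
rewrite (dzb_Lop_holo alpha beta Om) by assumption.
rewrite HolA, HolE, HolG, B0, F0, (dzb_eq0_open alpha beta Om B), (dzb_eq0_open alpha beta Om F)
  by assumption.
alg_eq.
Qed.

Hypothesis Has : associated_dzb alpha beta Om (Lop alpha beta A B C D E F G).

Lemma Lop_hpoly_test x0 y0 c0 c1 c2 : Om x0 y0 ->
  cadd (cmul alpha beta (dzb alpha beta A x0 y0) (cscal (-1) (cmul alpha beta cI c1)))
  (cadd (cmul alpha beta (dzb alpha beta B x0 y0) (cconj (cscal (-1) (cmul alpha beta cI c1))))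
  (cadd (cmul alpha beta (B x0 y0)
          (dzb_conj_value alpha (cscal (-2) (cmul alpha beta cI c2))))
  (cadd (cmul alpha beta (dzb alpha beta E x0 y0) c0)
  (cadd (cmul alpha beta (dzb alpha beta F x0 y0) (cconj c0))
  (cadd (cmul alpha beta (F x0 y0) (dzb_conj_value alpha c1))
   (dzb alpha beta G x0 y0)))))) = (0, 0).
Proof.
intros H0.
pose proof (Has _ (C2on_hpoly alpha beta x0 y0 Om c0 c1 c2)
  (holo_hpoly alpha beta x0 y0 Om c0 c1 c2) x0 y0 H0) as Hw.
rewrite (dzb_Lop_holo alpha beta Om) in Hw by auto using C2on_hpoly, holo_hpoly.
rewrite !dzb_conj, !Dx_hpoly, !Dy_hpoly, !hpoly_at in Hw.
rewrite <- Hw; unfold dzb_conj_value; alg_eq.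
Qed.

Lemma dzb_G_E_F_eq0 x y : Om x y ->
  dzb alpha beta G x y = (0, 0) /\ dzb alpha beta E x y = (0, 0) /\ dzb alpha beta F x y = (0, 0).
Proof.
intros Hxy.
assert (HG0 : dzb alpha beta G x y = (0, 0))
  by (rewrite <- (Lop_hpoly_test x y (0, 0) (0, 0) (0, 0) Hxy);
      unfold dzb_conj_value; alg_eq).
split; [exact HG0|].
(* The tests [c0 = 1] and [c0 = i] give [e + f = 0] and [e i - f i = 0]. *)
apply (cmul_cramer2 alpha beta _ _ (1, 0) (1, 0) cI (cconj cI)).
- rewrite <- (Lop_hpoly_test x y (1, 0) (0, 0) (0, 0) Hxy), HG0;
  unfold dzb_conj_value; alg_eq.
- rewrite <- (Lop_hpoly_test x y cI (0, 0) (0, 0) Hxy), HG0;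
  unfold dzb_conj_value; alg_eq.
- unfold cnorm, cadd, cmul, cscal, cconj, cI; cbn [fst snd]; intro Z; apply Ha; lra.
Qed.

Lemma B_eq0 x y : Om x y -> B x y = (0, 0).
Proof.
intros Hxy; destruct (dzb_G_E_F_eq0 x y Hxy) as (HG0 & _).
(* For [c2 = 1] only the [B] term survives, with factor [dzb (conj (-2 i zeta)) = -2 alpha]. *)
apply (cmul_eq0_l alpha beta _ (-2 * alpha, 0)).
- rewrite <- (Lop_hpoly_test x y (0, 0) (0, 0) (1, 0) Hxy), HG0;
  unfold dzb_conj_value; alg_eq.
- unfold cnorm; cbn [fst snd]; intro Z; apply Ha; nra.
Qed.

Lemma dzb_A_F_eq0 x y : Om x y -> dzb alpha beta A x y = (0, 0) /\ F x y = (0, 0).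
Proof.
intros Hxy; destruct (dzb_G_E_F_eq0 x y Hxy) as (HG0 & _).
assert (HB0 := dzb_eq0_open alpha beta Om B x y HO Hxy B_eq0).
(* The tests [c1 = 1] and [c1 = i]; the determinant has norm
   [- alpha (alpha beta^2 - 4 alpha^2)]. *)
apply (cmul_cramer2 alpha beta _ _
  (cscal (-1) (cmul alpha beta cI (1, 0))) (dzb_conj_value alpha (1, 0))
  (cscal (-1) (cmul alpha beta cI cI)) (dzb_conj_value alpha cI)).
- rewrite <- (Lop_hpoly_test x y (0, 0) (1, 0) (0, 0) Hxy), HG0, HB0;
  unfold dzb_conj_value; alg_eq.
- rewrite <- (Lop_hpoly_test x y (0, 0) cI (0, 0) Hxy), HG0, HB0;
  unfold dzb_conj_value; alg_eq.
- unfold cnorm, dzb_conj_value, cadd, cmul, cscal, cconj, cI; cbn [fst snd].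
  intro Z; apply (Rmult_integral_contrapositive_currified _ _ Ha Hab); lra.
Qed.

Lemma coefficients_of_associated :
  (forall x y, Om x y -> B x y = (0, 0)) /\ (forall x y, Om x y -> F x y = (0, 0)) /\
  holo alpha beta Om A /\ holo alpha beta Om E /\ holo alpha beta Om G.
Proof.
repeat split; intros x y Hxy;
  destruct (dzb_G_E_F_eq0 x y Hxy) as (? & ? & ?), (dzb_A_F_eq0 x y Hxy);
  auto using B_eq0.
Qed.

End Associated.

Theorem lemma1 (alpha beta : R) (Om : R -> R -> Prop)
  (A B C D E F G : R -> R -> alg) :
  alpha * beta ^ 2 - 4 * alpha ^ 2 <> 0 ->
  is_domain Om ->
  C1on Om A -> C1on Om B -> C1on Om E -> C1on Om F -> C1on Om G ->
  (associated_dzb alpha beta Om (Lop alpha beta A B C D E F G) <->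
   ((forall x y, Om x y -> B x y = (0, 0)) /\
    (forall x y, Om x y -> F x y = (0, 0)) /\
    holo alpha beta Om A /\ holo alpha beta Om E /\ holo alpha beta Om G)).
Proof.
intros Hab (_ & HO & _) HA HB HE HF HG; split.
- exact (coefficients_of_associated alpha beta Om A B C D E F G Hab HO HA HB HE HF HG).
- intros (HB0 & HF0 & HolA & HolE & HolG).
  exact (associated_of_holo alpha beta Om A B C D E F G HO HA HB HE HF HG
    HB0 HF0 HolA HolE HolG).
Qed.
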